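(* Let $S$ be either the $d$-regular tree $\mathbb{T}_d$ or the lattice $\mathbb{Z}^d$, and consider the mutating contact process $(\xi_t)_{t\ge0}$ on $S$ with death rate $\delta>0$ and mutation rate $\mu>0$, started from any initial configuration. Then for every $x\in S$, \[ P\left(\xi_t(x)=1\right)\to0 \quad\text{as } t\to\infty . \]
   Context: Let $S$ be a graph with nearest-neighbour relation $\sim$ ($\mathbb{Z}^d$ with its usual nearest-neighbour structure, or the infinite tree $\mathbb{T}_d$ in which every vertex has exactly $d$ neighbours). The mutating contact process with parameters $\delta>0$ (death rate) and $\mu>0$ (mutation rate) is the Feller process $\xi_t\in\{0,1,2\}^S$ ($0$ = vacant, $1$ = the distinguished strain, $2$ = any other strain) which, writing $n(x,\xi,i)=\#\{y\sim x:\xi(y)=i\}$, makes the following transitions at each site $x$: $i\to0$ at rate $\delta$ ($i=1,2$); $0\to i$ at rate $n(x,\xi,i)$ ($i=1,2$); $1\to2$ at rate $\mu$. *)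

From HB Require Import structures.
From mathcomp Require Import all_boot all_order all_algebra.
From mathcomp Require Import all_classical all_reals all_analysis.

Set Implicit Arguments.
Unset Strict Implicit.
Unset Printing Implicit Defensive.

Import Order.TTheory GRing.Theory Num.Theory.
Import numFieldNormedType.Exports.
Local Open Scope classical_set_scope.
Local Open Scope ring_scope.

(* A locally finite graph: vertex type with decidable equality and the
   (duplicate-free) list of nearest neighbours of each vertex. *)
Record lgraph := LGraph { vtx : eqType; nbrs : vtx -> seq vtx }.

Definition Zd_vtx (d : nat) : eqType := {ffun 'I_d -> int}.

Definition Zd_nbrs (d : nat) (x : Zd_vtx d) : seq (Zd_vtx d) :=
  flatten [seq [:: ([ffun j => x j + ((i == j) : nat)%:Z] : Zd_vtx d);
                   ([ffun j => x j - ((i == j) : nat)%:Z] : Zd_vtx d)]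
          | i <- enum 'I_d].

Definition Zd_graph (d : nat) : lgraph := @LGraph (Zd_vtx d) (@Zd_nbrs d).

(* ---------- The d-regular tree T_d ----------
   Realised as the Cayley graph of the free product of d copies of Z/2:
   vertices are reduced words (no two consecutive equal letters) over 'I_d,
   and w ~ w' iff one is obtained from the other by appending one letter. *)
Definition reduced (d : nat) (s : seq 'I_d) : bool :=
  sorted (fun a b : 'I_d => a != b) s.

Definition Td_vtx (d : nat) : eqType := {s : seq 'I_d | reduced s}.

Definition Td_nbrs (d : nat) (w : Td_vtx d) : seq (Td_vtx d) :=
  let s := sval w in
  pmap (fun c : seq 'I_d => insub c : option (Td_vtx d))
    ((if s is [::] then [::] else [:: take (size s).-1 s])
       ++ [seq rcons s a | a <- enum 'I_d]).

Definition Td_graph (d : nat) : lgraph := @LGraph (Td_vtx d) (@Td_nbrs d).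

(* states: 0 = vacant, 1 = distinguished strain, 2 = other strains *)
Definition st0 : 'I_3 := @Ordinal 3 0 isT.
Definition st1 : 'I_3 := @Ordinal 3 1 isT.
Definition st2 : 'I_3 := @Ordinal 3 2 isT.

Section MCP.
Variables (R : realType) (G : lgraph).

Definition config := vtx G -> 'I_3.

Definition nb (x : vtx G) (xi : config) (i : 'I_3) : nat :=
  count (fun y => xi y == i) (nbrs x).

Definition mcp_rate (delta mu : R) (x : vtx G) (xi : config) (j : 'I_3) : R :=
  let i := xi x in
  if (i != st0) && (j == st0) then delta
  else if (i == st0) && (j != st0) then (nb x xi j)%:R
  else if (i == st1) && (j == st2) then mu
  else 0.

Definition upd (xi : config) (x : vtx G) (j : 'I_3) : config :=
  fun y => if y == x then j else xi y.

Definition cyl (A : seq (vtx G)) (sigma : config) (xi : config) : bool :=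
  all (fun x => xi x == sigma x) A.

Definition mcp_gen (delta mu : R) (A : seq (vtx G)) (sigma : config)
  (xi : config) : R :=
  \sum_(x <- undup A) \sum_(j : 'I_3)
     mcp_rate delta mu x xi j *
       ((cyl A sigma (upd xi x j))%:R - (cyl A sigma xi)%:R).

(* xi : R -> Omega -> config is (a version of) the mutating contact process
   with parameters delta, mu started from eta: its one-time laws solve the
   Kolmogorov forward equation  d/dt E[f(xi_t)] = E[L f(xi_t)]  for every
   local (cylinder) function f, with initial law the point mass at eta.
   For bounded-rate finite-range systems this determines the one-time
   marginals uniquely (Liggett), and the Feller process satisfies it. *)
Definition is_mcp (delta mu : R) (eta : config)
  (dsp : measure_display) (Omega : measurableType dsp)
  (P : probability Omega R) (xi : R -> Omega -> config) : Prop :=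
  [/\ (forall t x i, measurable [set w | xi t w x = i]),
      (forall x, P [set w | xi 0 w x = eta x] = 1%E) &
      (forall (A : seq (vtx G)) (sigma : config),
         let g := fun t : R => fine (P [set w | cyl A sigma (xi t w)]) in
         g t @[t --> at_right 0] --> g 0 /\
         (forall t : R, 0 < t ->
            is_derive t 1 g
              (fine (\int[P]_w (mcp_gen delta mu A sigma (xi t w))%:E))))].

End MCP.

From mathcomp Require Import all_boot all_order all_algebra.
From mathcomp Require Import all_classical all_reals all_analysis.
From mathcomp Require Import ring lra zify.
Set Implicit Arguments.
Unset Strict Implicit.
Unset Printing Implicit Defensive.

Import Order.TTheory GRing.Theory Num.Theory.
Import numFieldNormedType.Exports.
Local Open Scope classical_set_scope.
Local Open Scope ring_scope.

(* For [i = (A, y)] let [p_j(i, t) = P(xi_t(y) = j, xi_t = 0 on A)]. The forward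
   equations close on these cylinder probabilities:
   [p_j(i)' = - c_A p_j(i) + sum_k w_k p_j(i_k) -/+ mu p_1(i)], with weights [w_k >= 0]
   leading to indices whose set [A] is larger by at most one site; only the mutation
   term couples the two strains. Hence [D(i, t) = p_2(i, t) + (1 - e^(mu t)) p_1(i, t)]
   solves the cooperative system [D' = - c D + sum_k w_k D(i_k)] with [D(i, 0) >= 0],
   and [D] is bounded below on bounded time intervals. Since the total weight out of
   [i] grows at most like [alpha (|A| + 1)], a Picard-type induction on a short interval
   improves the lower bound [- B] to [- B C(|A| + N, N) (alpha t)^N], which tends to 0
   when [alpha t <= 1/4]; stepping in time, [D >= 0] everywhere.
   For [A] empty this reads [(e^(mu t) - 1) P(xi_t(x) = 1) <= P(xi_t(x) = 2) <= 1],
   so [P(xi_t(x) = 1) <= 1 / (mu t)]. *)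

Section RealFacts.
Variable R : realType.

Lemma is_derive_continuous (f : R -> R) (x df : R) :
  is_derive x 1 f df -> {for x, continuous f}.
Proof.
by move=> f_x; apply: differentiable_continuous; apply/derivable1_diffP; exact: ex_derive.
Qed.

Lemma is_derive_sub_cst (t0 x : R) : is_derive x 1 (fun s : R => s - t0) 1.
Proof. by have := is_deriveB (is_derive_id x 1) (is_derive_cst t0 x 1); rewrite subr0. Qed.

Lemma is_derive_expR_shift (c t0 x : R) :
  is_derive x 1 (fun s : R => expR (c * (s - t0))) (expR (c * (x - t0)) * c).
Proof.
have lin : is_derive x 1 (fun s : R => c * (s - t0)) c.
  by have := is_deriveZ c (is_derive_sub_cst t0 x); rewrite /GRing.scale /= mulr1.
exact: is_derive1_comp.
Qed.

Lemma is_derive_pow_shift (t0 x : R) n :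
  is_derive x 1 (fun s : R => (s - t0) ^+ n.+1) (n.+1%:R * (x - t0) ^+ n).
Proof.
have := is_deriveX n.+1 (is_derive_sub_cst t0 x).
by rewrite exprfctE /GRing.scale /= mulr1.
Qed.

Lemma ge0_geometric_lower_bound (x C : R) : 0 <= C ->
  (forall N : nat, - (C / 2 ^+ N) <= x) -> 0 <= x.
Proof.
move=> C_ge0 x_ge; rewrite leNgt; apply/negP => x_lt0.
have Nx_gt0 : 0 < - x by rewrite oppr_gt0.
set n := Num.Def.archi_bound (C / - x).
have Cx_lt : C / - x < n%:R by apply: archi_boundP; rewrite divr_ge0 // ltW.
have n_le : n%:R <= (2 : R) ^+ n by rewrite -natrX ler_nat ltnW // ltn_expl.
have : C < 2 ^+ n * - x.
  by rewrite ltr_pdivrMr // in Cx_lt; apply: lt_le_trans Cx_lt _; rewrite ler_wpM2r // ltW.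
rewrite -ltr_pdivrMl ?exprn_gt0 // => C_lt.
by have := x_ge n; rewrite mulrC; lra.
Qed.

Lemma is_derive_one_sub_expR (mu t : R) :
  is_derive t 1 (fun s : R => 1 - expR (mu * s)) (- (expR (mu * t) * mu)).
Proof.
have lin : is_derive t 1 (fun s : R => mu * s) mu.
  by have := is_deriveZ mu (is_derive_id t 1); rewrite /GRing.scale /= mulr1.
have := is_deriveB (is_derive_cst (1 : R) t 1) (is_derive1_comp (is_derive_expR (mu * t)) lin).
by rewrite sub0r.
Qed.

Lemma cvg_pinfty_le_inv (f : R -> R) (a : R) : 0 < a ->
  (forall t, 0 < t -> 0 <= f t <= (a * t)^-1) -> f t @[t --> +oo] --> 0.
Proof.
move=> a_gt0 f_le.
have t_gt0 := nbhs_pinfty_gt (num_real (0 : R)).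
apply: (@squeeze_cvgr _ _ _ _ (cst 0) (fun t => (a * t)^-1)).
- by near=> t; apply: f_le; near: t.
- exact: cvg_cst.
- apply/gtr0_cvgV0; first by near=> t; rewrite mulr_gt0 //; near: t.
  by apply: gt0_cvgMry => //; apply/cvgryPge => A; exact: nbhs_pinfty_ge.
Unshelve. all: end_near.
Qed.

End RealFacts.

(** * Positivity of cooperative linear systems *)

Lemma mul_bin_succ (n N : nat) : (N.+1 * 'C(n + N.+1, N.+1) = n.+1 * 'C(n.+1 + N, N))%N.
Proof.
rewrite mul_bin_left addSn -addnS; congr (_ * _)%N.
by rewrite addnS subSn ?leq_addl // addnK.
Qed.

Lemma bin_le_exp2 n m : ('C(n, m) <= 2 ^ n)%N.
Proof.
elim: n m => [|n IHn] [|m] //; first by rewrite bin0 expn_gt0.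
by rewrite binS expnS mul2n -addnn leq_add.
Qed.

Section PicardBound.
Variables (R : realType) (al B t0 : R).

Definition coop_bound (n N : nat) (t : R) : R :=
  B * ('C(n + N, N))%:R * (al * (t - t0)) ^+ N.

Lemma coop_bound_ge0 (t : R) n N :
  0 <= al -> 0 <= B -> t0 <= t -> 0 <= coop_bound n N t.
Proof. by move=> *; rewrite /coop_bound !mulr_ge0 // exprn_ge0 // mulr_ge0 // subr_ge0. Qed.

Lemma coop_bound_at0 n N : coop_bound n N.+1 t0 = 0.
Proof. by rewrite /coop_bound subrr mulr0 expr0n mulr0. Qed.

Lemma is_derive_coop_bound (x : R) n N :
  is_derive x 1 (coop_bound n N.+1) (al * n.+1%:R * coop_bound n.+1 N x).
Proof.
pose K := B * ('C(n + N.+1, N.+1))%:R * al ^+ N.+1.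
have -> : coop_bound n N.+1 = fun s => K * (s - t0) ^+ N.+1.
  by apply/funext => s; rewrite /coop_bound /K exprMn; ring.
apply: trigger_derive (is_deriveZ K (is_derive_pow_shift t0 x N)) _.
have bin : (N.+1%:R * ('C(n + N.+1, N.+1))%:R : R) = n.+1%:R * ('C(n.+1 + N, N))%:R.
  by rewrite -!natrM mul_bin_succ.
rewrite /GRing.scale /= /K /coop_bound exprMn exprS.
transitivity (B * al * al ^+ N * (x - t0) ^+ N * (N.+1%:R * ('C(n + N.+1, N.+1))%:R)).
  by ring.
by rewrite bin; ring.
Qed.

End PicardBound.

Section Cooperative.
Variables (R : realType) (I : eqType) (dom : I -> Prop) (sz : I -> nat) (c : I -> R)
  (moves : I -> seq (R * I)) (D : I -> R -> R) (al B T : R).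
Hypotheses (al_gt0 : 0 < al) (B_ge0 : 0 <= B)
  (c_ge0 : forall i, dom i -> 0 <= c i)
  (movesP : forall i, dom i -> forall k, k \in moves i ->
     [/\ 0 <= k.1, dom k.2 & (sz k.2 <= (sz i).+1)%N])
  (moves_rate : forall i, dom i -> \sum_(k <- moves i) k.1 <= al * (sz i).+1%:R)
  (D_derive : forall i, dom i -> forall t : R, 0 < t ->
     is_derive t 1 (D i) (- c i * D i t + \sum_(k <- moves i) k.1 * D k.2 t))
  (D_cont0 : forall i, dom i -> D i t @[t --> 0^'+] --> D i 0)
  (D_ge : forall i, dom i -> forall t : R, 0 <= t -> t <= T -> - B <= D i t).

Local Notation bound := (coop_bound al B).

Lemma coop_right_cont i t0 : dom i -> 0 <= t0 -> D i s @[s --> t0^'+] --> D i t0.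
Proof.
move=> dom_i; rewrite le_eqVlt => /predU1P[<-|t0_gt0]; first exact: D_cont0.
by apply: cvg_at_right_filter; apply: is_derive_continuous (D_derive dom_i t0_gt0).
Qed.

Lemma coop_flux_ge i t0 N x : dom i -> t0 <= x ->
  (forall j, dom j -> - bound t0 (sz j) N x <= D j x) ->
  - (al * (sz i).+1%:R * bound t0 (sz i).+1 N x) <= \sum_(k <- moves i) k.1 * D k.2 x.
Proof.
move=> dom_i t0_le_x D_x; set M := bound t0 (sz i).+1 N x.
have M_ge0 : 0 <= M by apply: coop_bound_ge0 => //; apply: ltW.
apply: le_trans (_ : \sum_(k <- moves i) k.1 * (- M) <= _).
  by rewrite -mulr_suml mulrN lerN2 ler_wpM2r // moves_rate.
rewrite big_seq_cond [leRHS]big_seq_cond; apply: ler_sum => k /andP[k_in _].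
have [k1_ge0 dom_k sz_k] := movesP dom_i k_in.
rewrite ler_wpM2l //; apply: le_trans (D_x _ dom_k); rewrite lerN2 /M /coop_bound.
rewrite ler_wpM2r ?exprn_ge0 ?mulr_ge0 ?subr_ge0 ?(ltW al_gt0) //.
by rewrite ler_wpM2l // ler_nat leq_bin2l // leq_add2r.
Qed.

(* The integrating factor [e^(c_i (s - t0))] absorbs the diagonal term of the system. *)
Definition coop_weighted t0 N i (s : R) : R :=
  expR (c i * (s - t0)) * (D i s + bound t0 (sz i) N.+1 s).

Lemma is_derive_coop_weighted t0 N i (x : R) : dom i -> 0 < x ->
  is_derive x 1 (coop_weighted t0 N i)
    (expR (c i * (x - t0)) * (c i * bound t0 (sz i) N.+1 x
       + \sum_(k <- moves i) k.1 * D k.2 x + al * (sz i).+1%:R * bound t0 (sz i).+1 N x)).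
Proof.
move=> dom_i x_gt0; apply: trigger_derive (is_deriveM (is_derive_expR_shift (c i) t0 x)
  (is_deriveD (D_derive dom_i x_gt0) (is_derive_coop_bound al B t0 x (sz i) N))) _.
by rewrite /GRing.scale /= addrfctE; ring.
Qed.

Lemma coop_weighted_cont t0 N i t : dom i -> 0 <= t0 -> t0 < t ->
  {within `[t0, t], continuous (coop_weighted t0 N i)}.
Proof.
move=> dom_i t0_ge0 t0_lt_t; apply/continuous_within_itvP => //; split.
- move=> x; rewrite in_itv /= => /andP[t0_lt_x _].
  exact: is_derive_continuous (is_derive_coop_weighted t0 N dom_i (le_lt_trans t0_ge0 t0_lt_x)).
- apply: cvgM.
    apply: cvg_at_right_filter.
    exact: is_derive_continuous (is_derive_expR_shift (c i) t0 t0).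
  apply: cvgD; first exact: coop_right_cont.
  apply: cvg_at_right_filter.
  exact: is_derive_continuous (is_derive_coop_bound al B t0 t0 (sz i) N).
- apply: cvg_at_left_filter.
  exact: is_derive_continuous (is_derive_coop_weighted t0 N dom_i (le_lt_trans t0_ge0 t0_lt_t)).
Qed.

Lemma coop_bound_step N t0 : 0 <= t0 -> (forall j, dom j -> 0 <= D j t0) ->
  (forall j, dom j -> forall t, t0 <= t -> t <= T -> - bound t0 (sz j) N t <= D j t) ->
  forall i, dom i -> forall t, t0 <= t -> t <= T -> - bound t0 (sz i) N.+1 t <= D i t.
Proof.
move=> t0_ge0 D_t0 D_ge_N i dom_i t; rewrite le_eqVlt => /predU1P[<- _|t0_lt_t t_le_T].
  by rewrite coop_bound_at0 oppr0 D_t0.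
set F := coop_weighted t0 N i.
pose dF x := expR (c i * (x - t0)) * (c i * bound t0 (sz i) N.+1 x
  + \sum_(k <- moves i) k.1 * D k.2 x + al * (sz i).+1%:R * bound t0 (sz i).+1 N x).
have F_derive (x : R) : x \in `]t0, t[%R -> is_derive x 1 F (dF x).
  rewrite in_itv /= => /andP[t0_lt_x _].
  exact: (is_derive_coop_weighted t0 N dom_i (le_lt_trans t0_ge0 t0_lt_x)).
have [x x_in F_incr] := MVT t0_lt_t F_derive (coop_weighted_cont (N := N) dom_i t0_ge0 t0_lt_t).
have [t0_lt_x x_lt_t] : t0 < x /\ x < t by move: x_in; rewrite in_itv /= => /andP.
have flux_ge := coop_flux_ge dom_i (ltW t0_lt_x)
  (fun j dom_j => D_ge_N j dom_j x (ltW t0_lt_x) (ltW (lt_le_trans x_lt_t t_le_T))).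
have diag_ge0 : 0 <= c i * bound t0 (sz i) N.+1 x.
  by rewrite mulr_ge0 ?c_ge0 ?coop_bound_ge0 ?(ltW al_gt0) ?(ltW t0_lt_x).
have F_t0 : F t0 = D i t0.
  by rewrite /F /coop_weighted coop_bound_at0 subrr mulr0 expR0 mul1r addr0.
have : 0 <= F t.
  rewrite -[F t](subrK (F t0)) F_incr F_t0 addr_ge0 ?D_t0 //.
  rewrite mulr_ge0 ?subr_ge0 ?(ltW t0_lt_t) // /dF mulr_ge0 ?expR_ge0 //; lra.
by rewrite /F /coop_weighted pmulr_rge0 ?expR_gt0 // -lerBlDr sub0r.
Qed.

Lemma coop_nonneg_near t0 : 0 <= t0 -> (forall j, dom j -> 0 <= D j t0) ->
  forall i, dom i -> forall t, t0 <= t -> t <= T -> al * (t - t0) <= 4^-1 -> 0 <= D i t.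
Proof.
move=> t0_ge0 D_t0.
have D_ge_N N : forall j, dom j -> forall t, t0 <= t -> t <= T -> - bound t0 (sz j) N t <= D j t.
  elim: N => [|N IHN] j dom_j t t0_le_t t_le_T; last exact: coop_bound_step.
  rewrite /coop_bound addn0 bin0 expr0 !mulr1.
  by apply: D_ge => //; apply: le_trans t0_le_t.
move=> i dom_i t t0_le_t t_le_T near_t0.
apply: (@ge0_geometric_lower_bound _ _ (B * 2 ^+ sz i)); first by rewrite mulr_ge0 ?exprn_ge0.
move=> N; apply: le_trans (D_ge_N N i dom_i t t0_le_t t_le_T); rewrite lerN2 /coop_bound.
have bin_le : ('C(sz i + N, N))%:R <= (2 : R) ^+ sz i * 2 ^+ N.
  by rewrite -exprD -natrX ler_nat bin_le_exp2.
have pow_le : (al * (t - t0)) ^+ N <= 4^-1 ^+ N.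
  by rewrite lerXn2r ?nnegrE ?invr_ge0 ?mulr_ge0 ?subr_ge0 ?(ltW al_gt0).
have -> : B * 2 ^+ sz i / 2 ^+ N = B * (2 ^+ sz i * 2 ^+ N) * 4^-1 ^+ N.
  rewrite -!mulrA; congr (B * (_ * _)); rewrite -exprVn -exprMn; congr (_ ^+ _); by field.
apply: ler_pM => //; first by rewrite mulr_ge0.
  by rewrite exprn_ge0 // mulr_ge0 ?subr_ge0 // ltW.
by rewrite ler_wpM2l.
Qed.

Lemma coop_nonneg : (forall i, dom i -> 0 <= D i 0) ->
  forall i, dom i -> forall t, 0 <= t -> t <= T -> 0 <= D i t.
Proof.
move=> D_0; pose h := (4 * al)^-1.
have h_gt0 : 0 < h by rewrite invr_gt0 mulr_gt0.
have al_h : al * h = 4^-1 by rewrite /h invfM mulrCA mulfV ?gt_eqF // mulr1.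
have D_ge0_upto m : forall i, dom i -> forall t, 0 <= t -> t <= T -> t <= m%:R * h -> 0 <= D i t.
  elim: m => [|m IHm] i dom_i t t_ge0 t_le_T t_le.
    by rewrite mul0r in t_le; rewrite (@le_anti _ _ t 0) ?t_le ?D_0.
  have [|mh_lt_t] := leP t (m%:R * h); first exact: IHm.
  apply: (coop_nonneg_near _ _ dom_i (ltW mh_lt_t)) => //.
  - by rewrite mulr_ge0 // ltW.
  - by move=> j dom_j; apply: IHm; rewrite ?mulr_ge0 ?(ltW h_gt0) // (le_trans (ltW mh_lt_t)).
  - rewrite -al_h ler_wpM2l ?(ltW al_gt0) //.
    by move: t_le; rewrite -natr1 mulrDl mul1r; lra.
move=> i dom_i t t_ge0 t_le_T; apply: (D_ge0_upto (Num.Def.archi_bound (t / h))) => //.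
by rewrite -ler_pdivrMr // ltW // archi_boundP // divr_ge0 // ltW.
Qed.

End Cooperative.

(** * The generator on occupied-and-vacant cylinders *)

Lemma state_cases (k : 'I_3) : [\/ k = st0, k = st1 | k = st2].
Proof.
case: k => [[|[|[|n]]] lt_k] //.
- by constructor 1; apply: val_inj.
- by constructor 2; apply: val_inj.
- by constructor 3; apply: val_inj.
Qed.

Lemma sum_states (V : nmodType) (F : 'I_3 -> V) :
  \sum_(k : 'I_3) F k = F st0 + F st1 + F st2.
Proof.
rewrite !big_ord_recr big_ord0 /= add0r.
by congr (F _ + F _ + F _); apply: val_inj.
Qed.

Lemma natr_count (R : pzSemiRingType) (T : Type) (a : pred T) (s : seq T) :
  (count a s)%:R = \sum_(z <- s) (a z)%:R :> R.
Proof. by elim: s => [|z s IHs]; rewrite ?big_nil // big_cons /= natrD IHs. Qed.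

Lemma sumr_const_seq (R : pzSemiRingType) (T : Type) (s : seq T) (c : R) :
  \sum_(i <- s) c = (size s)%:R * c.
Proof. by rewrite big_const_seq count_predT iter_addr_0 mulr_natl. Qed.

Section Generator.
Variables (R : realType) (G : lgraph) (delta mu : R).
Local Notation V := (vtx G).

Section SiteRates.
Variables (x : V) (xi : config G) (F : 'I_3 -> R) (c : R).
Local Notation flux := (\sum_(k : 'I_3) mcp_rate delta mu x xi k * (F k - c)).

Lemma flux_st0 : xi x = st0 ->
  flux = (nb x xi st1)%:R * (F st1 - c) + (nb x xi st2)%:R * (F st2 - c).
Proof. by move=> xi_x; rewrite sum_states /mcp_rate xi_x /= !mul0r add0r. Qed.

Lemma flux_st1 : xi x = st1 -> flux = delta * (F st0 - c) + mu * (F st2 - c).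
Proof. by move=> xi_x; rewrite sum_states /mcp_rate xi_x /= mul0r addr0. Qed.

Lemma flux_st2 : xi x = st2 -> flux = delta * (F st0 - c).
Proof. by move=> xi_x; rewrite sum_states /mcp_rate xi_x /= !mul0r !addr0. Qed.

End SiteRates.

Definition single (y : V) (j : 'I_3) : config G :=
  fun v => if v == y then j else st0.

Definition vacant (A : seq V) (xi : config G) : bool := all (fun a => xi a == st0) A.

Definition occ_vac (j : 'I_3) (i : seq V * V) (xi : config G) : bool :=
  cyl (i.2 :: i.1) (single i.2 j) xi.

Lemma occ_vacE j A y xi : y \notin A -> occ_vac j (A, y) xi = (xi y == j) && vacant A xi.
Proof.
move=> yA; rewrite /occ_vac /cyl /= /single eqxx; congr (_ && _).
by apply: eq_in_all => a aA /=; case: (a =P y) => // ay; rewrite -ay aA in yA.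
Qed.

Lemma vacant_rem v A xi : uniq A -> v \in A ->
  vacant A xi = (xi v == st0) && vacant (rem v A) xi.
Proof. by move=> uA vA; rewrite /vacant (perm_all _ (perm_to_rem vA)). Qed.

Lemma vacant_upd_in v A xi k : uniq A -> v \in A ->
  vacant A (upd xi v k) = (k == st0) && vacant (rem v A) xi.
Proof.
move=> uA vA; rewrite (vacant_rem _ uA vA) /upd eqxx; congr (_ && _).
apply: eq_in_all => a; rewrite (mem_rem_uniq _ uA) => /andP[av _].
by rewrite (negbTE av).
Qed.

Lemma vacant_upd_out v A xi k : v \notin A -> vacant A (upd xi v k) = vacant A xi.
Proof.
move=> vA; apply: eq_in_all => a aA; rewrite /upd; case: (a =P v) => // av.
by rewrite -av aA in vA.
Qed.

Lemma sum_occ_vac_extend j A y xi (s : seq V) : y \notin A ->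
  \sum_(z <- s | (z \notin A) && (z != y)) (occ_vac j (z :: A, y) xi)%:R
  = (count (fun z => [&& z \notin A, z != y & xi z == st0]) s)%:R
    * (occ_vac j (A, y) xi)%:R :> R.
Proof.
move=> yA; rewrite natr_count mulr_suml big_mkcond; apply: eq_bigr => z _.
case: ifP => [/andP[zA zy]|/negbT]; last first.
  by rewrite negb_and => /orP[] /negbTE ->; rewrite ?andbF mul0r.
by rewrite !occ_vacE ?inE ?negb_or 1?(eq_sym y) ?zy // zA -natrM mulnb /vacant /= andbCA.
Qed.

Lemma count_occupied_nbrs v A y xi : vacant A xi -> xi y != st0 ->
  (nb v xi st1 + nb v xi st2
   + count (fun z => [&& z \notin A, z != y & xi z == st0]) (nbrs v)
  = count (fun z => z \notin A) (nbrs v))%N.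
Proof.
move=> vacA y_occ; rewrite /nb; elim: (nbrs v) => [|z s IHs] //=; rewrite -IHs.
suff: (nat_of_bool (xi z == st1) + nat_of_bool (xi z == st2)
        + nat_of_bool [&& z \notin A, z != y & xi z == st0]
       = nat_of_bool (z \notin A))%N by lia.
case: (boolP (z \in A)) => zA /=.
  by move/allP: vacA => /(_ z zA) /eqP ->.
case: (z =P y) => [->|_] /=; first by case: (state_cases (xi y)) y_occ => ->.
by case: (state_cases (xi z)) => ->.
Qed.

Lemma flux_occ_vac_in j A y v xi : uniq (y :: A) -> v \in A -> j != st0 ->
  \sum_(k : 'I_3) mcp_rate delta mu v xi k *
     ((occ_vac j (A, y) (upd xi v k))%:R - (occ_vac j (A, y) xi)%:R)
  = delta * (occ_vac j (rem v A, y) xi)%:R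
    + \sum_(z <- nbrs v | (z \notin A) && (z != y)) (occ_vac j (z :: A, y) xi)%:R
    - (delta + (count (fun z => z \notin A) (nbrs v))%:R) * (occ_vac j (A, y) xi)%:R.
Proof.
move=> /= /andP[yA uA] vA j_occ.
have yv : y != v by apply: contraNneq yA => ->.
have yrA : y \notin rem v A by apply: contra yA; apply: mem_rem.
have occ_upd k : occ_vac j (A, y) (upd xi v k)
                 = [&& xi y == j, k == st0 & vacant (rem v A) xi].
  by rewrite occ_vacE // (vacant_upd_in _ _ uA vA) /upd (negbTE yv).
pose F k := (occ_vac j (A, y) (upd xi v k))%:R : R.
have [xv|xv|xv] := state_cases (xi v);
  [rewrite (flux_st0 F) | rewrite (flux_st1 F) | rewrite (flux_st2 F)];
  rewrite // /F !occ_upd sum_occ_vac_extend // !occ_vacE //;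
  rewrite (vacant_rem _ uA vA) xv /= ?andbF; try (rewrite /=; ring).
case: (boolP ((xi y == j) && vacant (rem v A) xi)) => [/andP[/eqP xy vac_rA]|_] /=;
  last by ring.
have vacA : vacant A xi by rewrite (vacant_rem _ uA vA) xv eqxx.
have y_occ : xi y != st0 by rewrite xy.
by rewrite -(count_occupied_nbrs v vacA y_occ) !natrD; ring.
Qed.

Lemma sum_occ_vac_move j A y xi (s : seq V) : y \notin A ->
  \sum_(z <- s | (z \notin A) && (z != y)) (occ_vac j (y :: A, z) xi)%:R
  = (count (fun z => [&& z \notin A, z != y & xi z == j]) s)%:R
    * ((xi y == st0) && vacant A xi)%:R :> R.
Proof.
move=> yA; rewrite natr_count mulr_suml big_mkcond; apply: eq_bigr => z _.
case: ifP => [/andP[zA zy]|/negbT]; last first.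
  by rewrite negb_and => /orP[] /negbTE ->; rewrite ?andbF mul0r.
by rewrite occ_vacE ?inE ?negb_or ?zy // zA -natrM mulnb andbC.
Qed.

Lemma nb_vacant_site j A y xi : vacant A xi -> xi y = st0 -> j != st0 ->
  nb y xi j = count (fun z => [&& z \notin A, z != y & xi z == j]) (nbrs y).
Proof.
move=> vacA xy j_occ; apply: eq_count => z /=.
case: (boolP (z \in A)) => [zA|_] /=.
  by move/allP: vacA => /(_ z zA) /eqP ->; rewrite eq_sym (negbTE j_occ).
by case: (z =P y) => [->|] //=; rewrite xy eq_sym (negbTE j_occ).
Qed.

Lemma flux_occ_vac_at j A y xi : uniq (y :: A) -> j != st0 ->
  \sum_(k : 'I_3) mcp_rate delta mu y xi k *
     ((occ_vac j (A, y) (upd xi y k))%:R - (occ_vac j (A, y) xi)%:R)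
  = \sum_(z <- nbrs y | (z \notin A) && (z != y)) (occ_vac j (y :: A, z) xi)%:R
    - delta * (occ_vac j (A, y) xi)%:R
    + (if j == st1 then - mu else mu) * (occ_vac st1 (A, y) xi)%:R.
Proof.
move=> /= /andP[yA _] j_occ.
have occ_upd k : occ_vac j (A, y) (upd xi y k) = (k == j) && vacant A xi.
  by rewrite occ_vacE // vacant_upd_out // /upd eqxx.
pose F k := (occ_vac j (A, y) (upd xi y k))%:R : R.
have [xy|xy|xy] := state_cases (xi y);
  [rewrite (flux_st0 F) | rewrite (flux_st1 F) | rewrite (flux_st2 F)];
  rewrite // /F !occ_upd sum_occ_vac_move // !occ_vacE // xy;
  case: (state_cases j) j_occ => -> // _ /=; case: (boolP (vacant A xi)) => vacA /=;
  rewrite ?andbF; try (rewrite /=; ring).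
- by rewrite -(@nb_vacant_site st1 _ _ _ vacA xy isT); ring.
- by rewrite -(@nb_vacant_site st2 _ _ _ vacA xy isT); ring.
Qed.

Definition occ_vac_moves (A : seq V) (y : V) : seq (R * (seq V * V)) :=
  flatten [seq (delta, (rem v A, y)) ::
             [seq (1, (z :: A, y)) | z <- nbrs v & (z \notin A) && (z != y)]
          | v <- A]
  ++ [seq (1, (y :: A, z)) | z <- nbrs y & (z \notin A) && (z != y)].

Definition exit_rate (A : seq V) : R :=
  delta + \sum_(v <- A) (delta + (count (fun z => z \notin A) (nbrs v))%:R).

Lemma mcp_gen_occ_vac j A y xi : uniq (y :: A) -> j != st0 ->
  mcp_gen delta mu (y :: A) (single y j) xi =
    - exit_rate A * (occ_vac j (A, y) xi)%:R
    + \sum_(k <- occ_vac_moves A y) k.1 * (occ_vac j k.2 xi)%:R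
    + (if j == st1 then - mu else mu) * (occ_vac st1 (A, y) xi)%:R.
Proof.
move=> uyA j_occ.
rewrite /mcp_gen undup_id // big_cons (flux_occ_vac_at _ uyA j_occ) big_seq_cond.
under eq_bigr => v /andP[vA _] do rewrite (flux_occ_vac_in _ uyA vA j_occ).
rewrite -big_seq_cond /occ_vac_moves big_cat big_flatten /= !big_map.
under [X in _ = _ + (X + _) + _]eq_bigr => v _ do rewrite big_cons big_map /= big_filter.
rewrite big_filter /=.
under [X in _ = _ + (_ + X) + _]eq_bigr => v _ do rewrite mul1r.
under [X in _ = _ + (X + _) + _]eq_bigr => v _ do (under eq_bigr => z _ do rewrite mul1r).
rewrite /exit_rate big_split /= sumrN -mulr_suml.
ring.
Qed.

Lemma occ_vac_moves_mem A y k : uniq (y :: A) -> k \in occ_vac_moves A y ->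
  [/\ k.1 = delta \/ k.1 = 1, uniq (k.2.2 :: k.2.1) & (size k.2.1 <= (size A).+1)%N].
Proof.
move=> /= /andP[yA uA]; rewrite /occ_vac_moves mem_cat => /orP[/flatten_mapP[v vA]|].
  rewrite inE => /orP[/eqP -> /=|].
    split; [by left | | by rewrite size_rem // (leq_trans (leq_pred _) (leqnSn _))].
    by rewrite (rem_uniq _ uA) andbT; apply: contra yA; apply: mem_rem.
  case/mapP => z; rewrite mem_filter => /andP[/andP[zA zy] _] -> /=.
  by split; [right | rewrite inE negb_or eq_sym zy yA zA uA |].
case/mapP => z; rewrite mem_filter => /andP[/andP[zA zy] _] -> /=.
by split; [right | rewrite inE negb_or zy zA yA uA |].
Qed.

Lemma occ_vac_moves_rate_sum A y (m : nat) : 0 <= delta ->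
  (forall v : V, (size (nbrs v) <= m)%N) ->
  \sum_(k <- occ_vac_moves A y) k.1 <= (delta + m%:R) * (size A).+1%:R.
Proof.
move=> delta_ge0 deg_le.
have sum_filter_le (v : V) (P : pred V) : \sum_(z <- [seq z <- nbrs v | P z]) (1 : R) <= m%:R.
  rewrite sumr_const_seq mulr1 ler_nat size_filter; exact: leq_trans (count_size _ _) (deg_le v).
rewrite /occ_vac_moves big_cat big_flatten /= !big_map.
under eq_bigr => v _ do rewrite big_cons big_map /=.
rewrite big_split /= sumr_const_seq.
have nbrs_le : \sum_(v <- A) \sum_(z <- [seq z <- nbrs v | (z \notin A) && (z != y)]) (1 : R)
               <= (size A)%:R * m%:R.
  by rewrite -sumr_const_seq; apply: ler_sum => v _; apply: sum_filter_le.
have := sum_filter_le y (fun z => (z \notin A) && (z != y)).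
move: nbrs_le; rewrite -natr1.
have : 0 <= (size A)%:R :> R by [].
set a := (\sum_(_ <- _) _); set b := (\sum_(_ <- _) _); set n := (size A)%:R.
nra.
Qed.

Lemma exit_rate_ge0 A : 0 <= delta -> 0 <= exit_rate A.
Proof. by move=> delta_ge0; rewrite addr_ge0 // sumr_ge0 // => v _; rewrite addr_ge0. Qed.

End Generator.

(** * Forward equations for the cylinder probabilities *)

Section ProbabilityFacts.
Variables (R : realType) (d : measure_display) (T : measurableType d) (P : probability T R).

Lemma fine_prob_ge0_le1 (E : set T) : measurable E -> 0 <= fine (P E) <= 1.
Proof.
move=> mE; rewrite fine_ge0 ?measure_ge0 //=.
by have := probability_le1 P mE; rewrite -(fineK (fin_num_measure P _ mE)) lee_fin.
Qed.

Lemma integral_lincomb_indic (I : Type) (r : seq I) (a : I -> R) (E : I -> T -> bool) :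
  (forall i, measurable [set w | E i w]) ->
  (\int[P]_w (\sum_(i <- r) a i * (E i w)%:R)%:E
   = (\sum_(i <- r) a i * fine (P [set w | E i w]))%:E)%E.
Proof.
move=> mE.
have indicE_i i w : (a i * (E i w)%:R)%:E = ((a i)%:E * (\1_[set w | E i w] w)%:E)%E.
  by rewrite indicE mem_setE.
under eq_integral do rewrite -sumEFin; under eq_integral do under eq_bigr do rewrite indicE_i.
rewrite integral_sum; last by move=> i; apply: integrableZl => //; exact: integrable_indic.
rewrite -sumEFin; apply: eq_bigr => i _; have mEi := mE i.
rewrite integralZl //; last exact: integrable_indic.
rewrite integral_indic // setIT EFinM fineK //; first exact: fin_num_measure.
exact: measurableT.
Qed.

End ProbabilityFacts.

Section ForwardEquations.
Variables (R : realType) (G : lgraph) (dsp : measure_display) (Omega : measurableType dsp)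
  (P : probability Omega R) (xi : R -> Omega -> config G) (delta mu : R).
Hypothesis xi_meas : forall t x i, measurable [set w | xi t w x = i].
Hypothesis forward : forall (A : seq (vtx G)) (sigma : config G),
  let g := fun t : R => fine (P [set w | cyl A sigma (xi t w)]) in
  g t @[t --> 0^'+] --> g 0 /\
  (forall t : R, 0 < t -> is_derive t 1 g
     (fine (\int[P]_w (mcp_gen delta mu A sigma (xi t w))%:E))).

Lemma measurable_cyl t A sigma : measurable [set w | cyl A sigma (xi t w)].
Proof.
elim: A => [|a A IHA]; first by rewrite [X in measurable X](_ : _ = setT) //; apply/seteqP.
rewrite [X in measurable X](_ : _ = [set w | xi t w a = sigma a] `&` [set w | cyl A sigma (xi t w)]).
  exact: measurableI.
apply/seteqP; split => w /=; rewrite /cyl /=; first by case/andP => /eqP -> ->.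
by case=> -> ->; rewrite eqxx.
Qed.

Definition occ_vac_prob (j : 'I_3) (i : seq (vtx G) * vtx G) (t : R) : R :=
  fine (P [set w | occ_vac j i (xi t w)]).

Lemma occ_vac_prob_ge0_le1 j i t : 0 <= occ_vac_prob j i t <= 1.
Proof. exact/fine_prob_ge0_le1/measurable_cyl. Qed.

Lemma occ_vac_prob_cont0 j i : occ_vac_prob j i t @[t --> 0^'+] --> occ_vac_prob j i 0.
Proof. exact: (forward (i.2 :: i.1) (single i.2 j)).1. Qed.

Lemma is_derive_occ_vac_prob j (A : seq (vtx G)) (y : vtx G) (t : R) :
  uniq (y :: A) -> j != st0 -> 0 < t ->
  is_derive t 1 (occ_vac_prob j (A, y))
    (- exit_rate delta A * occ_vac_prob j (A, y) t
     + \sum_(k <- occ_vac_moves delta A y) k.1 * occ_vac_prob j k.2 t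
     + (if j == st1 then - mu else mu) * occ_vac_prob st1 (A, y) t).
Proof.
move=> uyA j_occ t_gt0; have := (forward (y :: A) (single y j)).2 t t_gt0.
pose terms := [:: (- exit_rate delta A, (A, y, j)),
                  ((if j == st1 then - mu else mu), (A, y, st1))
               & [seq (k.1, (k.2, j)) | k <- occ_vac_moves delta A y]].
have gen w : mcp_gen delta mu (y :: A) (single y j) (xi t w)
             = \sum_(k <- terms) k.1 * (occ_vac k.2.2 k.2.1 (xi t w))%:R.
  by rewrite mcp_gen_occ_vac // !big_cons big_map /=; ring.
under eq_integral do rewrite gen.
rewrite (integral_lincomb_indic P terms fst (E := fun k w => occ_vac k.2.2 k.2.1 (xi t w)));
  last by move=> k; apply: measurable_cyl.
rewrite !big_cons big_map /= => g_derive.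
by apply: trigger_derive g_derive _; rewrite /occ_vac_prob; ring.
Qed.

(* The factor [1 - e^(mu t)] makes the mutation terms [-/+ mu p_1] cancel in the derivative. *)
Definition strain_balance (i : seq (vtx G) * vtx G) (t : R) : R :=
  occ_vac_prob st2 i t + (1 - expR (mu * t)) * occ_vac_prob st1 i t.

Lemma is_derive_strain_balance (A : seq (vtx G)) (y : vtx G) (t : R) :
  uniq (y :: A) -> 0 < t ->
  is_derive t 1 (strain_balance (A, y))
    (- exit_rate delta A * strain_balance (A, y) t
     + \sum_(k <- occ_vac_moves delta A y) k.1 * strain_balance k.2 t).
Proof.
move=> uyA t_gt0.
have d2 := is_derive_occ_vac_prob (j := st2) uyA isT t_gt0.
have d1 := is_derive_occ_vac_prob (j := st1) uyA isT t_gt0.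
apply: trigger_derive (is_deriveD d2 (is_deriveM (is_derive_one_sub_expR mu t) d1)) _.
rewrite /strain_balance /=.
under [X in _ = _ + X]eq_bigr => k _ do rewrite mulrDr mulrCA.
by rewrite big_split /= -mulr_sumr /GRing.scale /=; ring.
Qed.

Lemma strain_balance_cont0 i : strain_balance i t @[t --> 0^'+] --> strain_balance i 0.
Proof.
apply: cvgD; first exact: occ_vac_prob_cont0.
apply: cvgM; last exact: occ_vac_prob_cont0.
apply: cvg_at_right_filter; exact: is_derive_continuous (is_derive_one_sub_expR mu 0).
Qed.

Lemma strain_balance_ge (T : R) i t : 0 <= mu -> 0 <= t -> t <= T ->
  - expR (mu * T) <= strain_balance i t.
Proof.
move=> mu_ge0 t_ge0 t_le_T.
have /andP[p1_ge0 p1_le1] := occ_vac_prob_ge0_le1 st1 i t.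
have /andP[p2_ge0 _] := occ_vac_prob_ge0_le1 st2 i t.
have e_ge1 : 1 <= expR (mu * t) by rewrite -expR0 ler_expR mulr_ge0.
have e_le : expR (mu * t) <= expR (mu * T) by rewrite ler_expR ler_wpM2l.
rewrite /strain_balance; nra.
Qed.

Lemma strain_balance_at0 i : 0 <= strain_balance i 0.
Proof.
rewrite /strain_balance mulr0 expR0 subrr mul0r addr0.
by case/andP: (occ_vac_prob_ge0_le1 st2 i 0).
Qed.

Lemma strain_balance_ge0 (m : nat) (i : seq (vtx G) * vtx G) (t : R) :
  (forall v : vtx G, (size (nbrs v) <= m)%N) -> 0 < delta -> 0 <= mu ->
  uniq (i.2 :: i.1) -> 0 <= t -> 0 <= strain_balance i t.
Proof.
move=> deg_le delta_gt0 mu_ge0 uniq_i t_ge0.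
apply: (@coop_nonneg R _ (fun i => uniq (i.2 :: i.1)) (fun i => size i.1)
  (fun i => exit_rate delta i.1) (fun i => occ_vac_moves delta i.1 i.2) strain_balance
  (delta + m%:R) (expR (mu * t)) t) => //.
- by rewrite ltr_wpDr.
- by move=> ? _; apply/exit_rate_ge0/ltW.
- move=> [A y] /= uyA k k_in; have [k1 uniq_k sz_k] := occ_vac_moves_mem uyA k_in.
  by split => //; case: k1 => ->; [apply: ltW | apply: ler01].
- by move=> [A y] _ /=; apply: occ_vac_moves_rate_sum => //; apply: ltW.
- by move=> [A y] /= uyA s s_gt0; apply: is_derive_strain_balance.
- by move=> ? _; apply: strain_balance_cont0.
- by move=> ? _ s s_ge0 s_le_t; apply: strain_balance_ge.
- by move=> ? _; apply: strain_balance_at0.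
Qed.

Lemma prob_st1_occ_vac x t :
  P [set w | xi t w x = st1] = (occ_vac_prob st1 ([::], x) t)%:E.
Proof.
rewrite /occ_vac_prob fineK; last exact/fin_num_measure/measurable_cyl.
congr (P _); apply/seteqP; split => w /=; rewrite /occ_vac /cyl /single /= eqxx andbT.
  by move=> ->.
by move/eqP.
Qed.

Lemma occ_vac_prob_st1_bound (m : nat) x t :
  (forall v : vtx G, (size (nbrs v) <= m)%N) -> 0 < delta -> 0 < mu -> 0 < t ->
  0 <= occ_vac_prob st1 ([::], x) t <= (mu * t)^-1.
Proof.
move=> deg_le delta_gt0 mu_gt0 t_gt0.
have := strain_balance_ge0 (i := ([::], x)) deg_le delta_gt0 (ltW mu_gt0) isT (ltW t_gt0).
rewrite /strain_balance => balance_ge0.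
have /andP[p1_ge0 _] := occ_vac_prob_ge0_le1 st1 ([::], x) t.
have /andP[_ p2_le1] := occ_vac_prob_ge0_le1 st2 ([::], x) t.
have e_ge : 1 + mu * t <= expR (mu * t) := expR_ge1Dx _.
have mt_gt0 : 0 < mu * t by rewrite mulr_gt0.
by rewrite p1_ge0 -(ler_pM2l mt_gt0) mulfV ?gt_eqF //; nra.
Qed.

End ForwardEquations.

Lemma size_flatten_pairs (T I : Type) (f g : I -> T) (s : seq I) :
  size (flatten [seq [:: f i; g i] | i <- s]) = (2 * size s)%N.
Proof. by elim: s => //= a s ->; rewrite mulnS. Qed.

Lemma size_nbrs_le d G : G = Zd_graph d \/ G = Td_graph d ->
  forall v : vtx G, (size (nbrs v) <= (2 * d).+1)%N.
Proof.
case=> -> v /=; first by rewrite /Zd_nbrs size_flatten_pairs size_enum_ord.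
rewrite /Td_nbrs size_pmap (leq_trans (count_size _ _)) // size_cat size_map size_enum_ord.
by case: (sval v) => [|a s] /=; lia.
Qed.

Theorem theorem2 (R : realType) (d : nat) (hd : (1 <= d)%N) (G : lgraph)
  (hG : G = Zd_graph d \/ G = Td_graph d)
  (delta mu : R) (hdelta : 0 < delta) (hmu : 0 < mu)
  (eta : config G)
  (dsp : measure_display) (Omega : measurableType dsp)
  (P : probability Omega R) (xi : R -> Omega -> config G)
  (hxi : is_mcp delta mu eta P xi) (x : vtx G) :
  P [set w | xi t w x = st1] @[t --> +oo] --> 0%E.
Proof.
case: hxi => xi_meas _ forward.
have -> : (fun t => P [set w | xi t w x = st1])
          = fun t => (occ_vac_prob P xi st1 ([::], x) t)%:E.
  by apply/funext => t; exact: prob_st1_occ_vac.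
apply: cvg_EFin; first by near=> t.
apply: (cvg_pinfty_le_inv hmu) => t t_gt0 /=.
exact: (occ_vac_prob_st1_bound xi_meas forward x (size_nbrs_le hG) hdelta hmu t_gt0).
Unshelve. all: end_near.
Qed.
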